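(* For every max-min 1-bounded space algorithm $ALG$ for the classic bin packing problem and every positive even integer $m$, there exists a sorted item sequence $I$ such that $OPT(I)=m$ and $ALG(I)\ge \frac{5}{4}\cdot OPT(I)-\frac{1}{4}$.
   Context: Classic bin packing: an item sequence $I=(a_1,\dots,a_n)\in(0,1]^n$ must be packed into bins of capacity $1$ (an assignment $f:\{1,\dots,n\}\to\mathbb{N}$ with $\sum_{i:f(i)=j}a_i\le1$ for every $j$); $OPT(I)$ is the minimum number of non-empty bins, and $ALG(I)$ is the number of non-empty bins used by algorithm $ALG$ on $I$. $I$ is sorted if $a_1\ge a_2\ge\cdots\ge a_n$. A max-min algorithm first sorts the input in non-increasing order and then repeatedly takes either the head (first, largest) or the tail (last, smallest) item of the currently remaining sorted sequence and packs it into a bin, where each decision may depend only on the items already packed and on the current head and tail items, without seeing any other remaining items. A bin is open if it already contains an item and the algorithm may still pack items into it; once closed, a bin never receives further items. A 1-bounded space algorithm keeps at most one open bin at any time, i.e. each item is packed either into the most recently opened bin or into a new bin. *)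

From HB Require Import structures.
From mathcomp Require Import all_boot all_order all_algebra.
From mathcomp Require Import reals.
Set Implicit Arguments. Unset Strict Implicit. Unset Printing Implicit Defensive.
Import Order.TTheory GRing.Theory Num.Theory.
Local Open Scope ring_scope.

Section BinPacking.
Variable R : realType.

Definition items_ok (I : seq R) : bool := all (fun a => (0 < a) && (a <= 1)) I.

Definition sorted_items (I : seq R) : bool := sorted (fun x y => y <= x) I.

(* A packing: an assignment f of item indices (0-based) to bins (nat) such
   that each bin has total size at most 1. *)
Definition packing (I : seq R) (f : nat -> nat) : Prop :=
  forall j : nat, \sum_(i < size I | f i == j) I`_i <= 1.

Definition nbins (I : seq R) (f : nat -> nat) : nat :=
  size (undup [seq f i | i <- iota 0 (size I)]).

Definition is_OPT (I : seq R) (m : nat) : Prop :=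
  (exists f, packing I f /\ nbins I f = m) /\
  (forall f, packing I f -> (m <= nbins I f)%N).

(* History entry of a max-min algorithm: (packed item, taken from head?,
   packed into a new bin?). *)
Definition hist_entry := (R * bool * bool)%type.

(* Given the history of packed items,
   the current head item, the current tail item, and whether head and tail
   are the same (last remaining) item, it returns
   (take the head?, open a new bin for the chosen item?).
   If it asks to put the item into the open bin but there is no open bin or
   the item does not fit, a new bin is opened (so every algorithm is valid,
   and every valid algorithm is representable). *)
Definition maxmin_alg := seq hist_entry -> R -> R -> bool -> bool * bool.

Fixpoint run (A : maxmin_alg) (fuel : nat) (s : seq R) (h : seq hist_entry)
    (load : option R) (cnt : nat) : nat :=
  match fuel with
  | 0%N => cnt
  | fuel'.+1 =>
    match s with
    | [::] => cnt
    | a :: s1 =>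
      let t := last a s1 in
      let single := (size s == 1)%N in
      let d := A h a t single in
      let x := if d.1 then a else t in
      let s' := if d.1 then s1 else take (size s).-1 s in
      match load with
      | Some l =>
          if ~~ d.2 && (l + x <= 1)
          then run A fuel' s' (rcons h (x, d.1, false)) (Some (l + x)) cnt
          else run A fuel' s' (rcons h (x, d.1, true)) (Some x) cnt.+1
      | None => run A fuel' s' (rcons h (x, d.1, true)) (Some x) cnt.+1
      end
    end
  end.

Definition ALG (A : maxmin_alg) (I : seq R) : nat := run A (size I) I [::] None 0.

End BinPacking.

(* For every [k <= m], [k] items of size 11/20, [2m - k]
   of size 7/20 and [3m - 2k] of size 2/20 have total size [m] and pack
   perfectly into [m] bins.  While both an item of size 11/20 (large) and one of
   size 2/20 (small) remain, a max-min algorithm sees only its history and these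
   two ends, so its behaviour does not depend on [k].  Let [a] and [s] count the
   large and small items it has taken; [k] is chosen one more than [a] at the
   first moment when [2a + s >= 3m - 2] or [a >= m].  Until then a closed bin
   holds at most one large item and, weighing large items 8 and small ones 1,
   a weight of at most 12 (one large and four small, or ten small), which bounds
   the bins used so far from below.  The remaining [2m - a] items of size at
   least 7/20 > 1/3 need half a bin each, counted by the potential
   [2 * bins + (big items left) - (room for big items in the open bin)].
   Together: 4 ALG >= 5m - 1. *)

From HB Require Import structures.
From mathcomp Require Import all_boot all_order all_algebra.
From mathcomp Require Import reals.
From mathcomp Require Import lra zify.
Set Implicit Arguments. Unset Strict Implicit. Unset Printing Implicit Defensive.
Import Order.TTheory GRing.Theory Num.Theory.
Local Open Scope ring_scope.

Section Run.
Variable R : realType.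

Record config := Config {
  hist : seq (hist_entry R);
  load : option R;
  used : nat }.

Definition config0 : config := Config [::] None 0.

Definition place (p : config) (x : R) (d : bool * bool) : config :=
  let fresh := Config (rcons (hist p) (x, d.1, true)) (Some x) (used p).+1 in
  if load p is Some l then
    if ~~ d.2 && (l + x <= 1) then
      Config (rcons (hist p) (x, d.1, false)) (Some (l + x)) (used p)
    else fresh
  else fresh.

Lemma hist_place p x d : exists nb, hist (place p x d) = rcons (hist p) (x, d.1, nb).
Proof.
rewrite /place; case: (load p) => [l|]; last by eexists.
by case: ifP; eexists.
Qed.

Definition run_from (A : maxmin_alg R) fuel s p :=
  run A fuel s (hist p) (load p) (used p).

Lemma run_from_cons A fuel a s p :
  run_from A fuel.+1 (a :: s) p =
  let d := A (hist p) a (last a s) (nilp s) in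
  run_from A fuel (if d.1 then s else belast a s)
    (place p (if d.1 then a else last a s) d).
Proof.
have belastE : take (size (a :: s)).-1 (a :: s) = belast a s.
  by rewrite /= [a :: s]lastI -cats1 take_size_cat // size_belast.
rewrite /run_from /place /= belastE; case: (A _ _ _ _) => d1 d2 /=.
by case: (load p) => [l|] //; case: ifP.
Qed.

Section Potential.
Variable b : R.
Hypothesis third_lt_b : 1 < 3 * b.

Definition big (x : R) : bool := b <= x.

Definition room (l : option R) : nat :=
  if l is Some l then ((l + b <= 1)%R + (l + 2 * b <= 1)%R)%N else 0.
Arguments room : simpl never.

Lemma room_fresh x : (room (Some x) + big x <= 2)%N.
Proof.
by have := third_lt_b; rewrite /room /big; do ![case: leP => ?] => //; lra.
Qed.

Lemma room_add (l x : R) : 0 <= l -> 0 <= x -> l + x <= 1 ->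
  (room (Some ((l + x)%R : R)) + big x <= room (Some l))%N.
Proof.
by have := third_lt_b; rewrite /room /big => *; do ![case: leP => ?] => //; lra.
Qed.

Definition load_ge0 (p : config) : bool :=
  if load p is Some l then 0 <= l else true.

Lemma load_ge0_place p x d : load_ge0 p -> 0 <= x -> load_ge0 (place p x d).
Proof.
rewrite /load_ge0 /place => + x_ge0; case: (load p) => [l l_ge0|_] //.
by case: ifP => [/andP[_ fit]|_] //; exact: addr_ge0.
Qed.

Lemma place_potential p x d : load_ge0 p -> 0 <= x ->
  (2 * used p + big x + room (load (place p x d))
     <= 2 * used (place p x d) + room (load p))%N.
Proof.
rewrite /load_ge0 /place => + x_ge0; have := room_fresh x.
case: (load p) => [l|] /= fresh; last lia.
case: andP => [[_ fit]|_] l_ge0 /=; last lia.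
by have := room_add l_ge0 x_ge0 fit; lia.
Qed.

Lemma run_from_potential A fuel s p :
  (size s <= fuel)%N -> all (fun x => 0 <= x) s -> load_ge0 p ->
  (2 * used p + count big s <= 2 * run_from A fuel s p + room (load p))%N.
Proof.
elim: fuel s p => [|fuel IH] [|a s] p //=; rewrite ?addn0 ?leq_addr //.
move=> size_s s_ge0 p_ge0; rewrite run_from_cons /=.
have {}s_ge0 : all (fun x => 0 <= x) (a :: s) := s_ge0.
set d := A _ _ _ _; set x := if d.1 then a else last a s.
set s' := if d.1 then s else belast a s.
have count_s : (big a + count big s = big x + count big s')%N.
  rewrite /x /s'; case: ifP => _ //.
  by rewrite -[LHS]/(count big (a :: s)) lastI -cats1 count_cat /= addn0 addnC.
have x_ge0 : 0 <= x.
  by apply: (allP s_ge0); rewrite /x; case: ifP => _; rewrite ?mem_head ?mem_last.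
have s'_ge0 : all (fun x => 0 <= x) s'.
  apply/allP => y y_in; apply: (allP s_ge0).
  move: y_in; rewrite /s'; case: ifP => _ => [y_in|/mem_belast //].
  by rewrite inE y_in orbT.
have size_s' : (size s' <= fuel)%N by rewrite /s'; case: ifP; rewrite ?size_belast.
have := place_potential d p_ge0 x_ge0.
have := IH s' (place p x d) size_s' s'_ge0 (load_ge0_place d p_ge0 x_ge0).
lia.
Qed.
End Potential.
End Run.

Lemma pairwise_nseq (T : Type) (r : rel T) n x : r x x -> pairwise r (nseq n x).
Proof. by move=> rxx; elim: n => //= n ->; rewrite all_nseq rxx orbT. Qed.

Lemma allrel_nseq (T S : Type) (r : T -> S -> bool) i j x y :
  r x y -> allrel r (nseq i x) (nseq j y).
Proof. by move=> rxy; rewrite /allrel all_nseq /= all_nseq rxy !orbT. Qed.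

Lemma count_window (P : pred nat) s lo n : uniq s ->
  (forall i, i \in s -> P i -> lo <= i < lo + n)%N -> (count P s <= n)%N.
Proof.
move=> s_uniq window; rewrite -size_filter.
rewrite -[n](size_iota lo); apply: uniq_leq_size; first exact: filter_uniq.
by move=> i; rewrite mem_filter mem_iota => /andP[Pi /window]; apply.
Qed.

Section Packing.
Variable R : realType.

Lemma sum_bins (F : nat -> R) (f : nat -> nat) n :
  \sum_(i < n) F i =
  \sum_(j <- undup [seq f i | i <- iota 0 n]) \sum_(i < n | f i == j) F i.
Proof.
under [RHS]eq_bigr => j _ do rewrite big_mkcond /=.
rewrite exchange_big /=; apply: eq_bigr => i _.
have fi_in : f i \in undup [seq f i | i <- iota 0 n].
  by rewrite mem_undup; apply: map_f; rewrite mem_iota /= add0n ltn_ord.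
rewrite (bigD1_seq (f i)) ?undup_uniq //= eqxx big1 ?addr0 //.
by move=> j /negbTE; rewrite eq_sym => ->.
Qed.

Lemma sum_le_nbins (I : seq R) f : packing I f -> \sum_(x <- I) x <= (nbins I f)%:R.
Proof.
move=> f_packs; rewrite (big_nth 0) big_mkord (sum_bins _ f) /nbins.
apply: le_trans (_ : \sum_(j <- undup _) 1 <= _).
  by apply: ler_sum => j _; apply: f_packs.
by rewrite big_const_seq iter_addr_0 count_predT.
Qed.

Lemma nbins_le (I : seq R) f n :
  (forall i, i < size I -> f i < n)%N -> (nbins I f <= n)%N.
Proof.
move=> f_lt; rewrite /nbins -[n in (_ <= n)%N](size_iota 0).
apply: uniq_leq_size (undup_uniq _) _ => _ /[!mem_undup] /mapP[i + ->].
by rewrite !mem_iota /= !add0n => /f_lt.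
Qed.

Lemma sum_const_range (F : nat -> R) (P : pred nat) lo hi c :
  (forall i, lo <= i < hi -> F i = c)%N ->
  \sum_(lo <= i < hi | P i) F i = c *+ count P (index_iota lo hi).
Proof.
move=> F_const; rewrite big_nat_cond (eq_bigr (fun _ => c)).
  rewrite big_const_seq iter_addr_0; congr (_ *+ _).
  by apply: eq_in_count => i; rewrite mem_index_iota => ->.
by move=> i /andP[/F_const].
Qed.

End Packing.

Section Instance.
Variable R : realType.

Definition tw (n : nat) : R := n%:R / 20%:R.

Lemma tw_add a b : tw a + tw b = tw (a + b).
Proof. by rewrite /tw natrD mulrDl. Qed.

Lemma tw_mulrn a n : tw a *+ n = tw (a * n).
Proof. by rewrite /tw -mulrnAl natrM mulr_natr. Qed.

Lemma tw_le a b : (tw a <= tw b) = (a <= b)%N.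
Proof. by rewrite /tw ler_pM2r ?invr_gt0 ?ltr0n // ler_nat. Qed.

Lemma tw_nat n : tw (20 * n) = n%:R.
Proof. by rewrite /tw natrM mulrAC divff ?mul1r // pnatr_eq0. Qed.

Lemma tw_le1 n : (tw n <= 1) = (n <= 20)%N.
Proof. by rewrite -[1](tw_nat 1) tw_le. Qed.

Lemma tw_ge0 n : 0 <= tw n.
Proof. by rewrite /tw divr_ge0 ?ler0n. Qed.

Definition large : R := tw 11.
Definition medium : R := tw 7.
Definition small : R := tw 2.

Definition instance (i j l : nat) : seq R :=
  nseq i large ++ nseq j medium ++ nseq l small.

Lemma items_ok_instance i j l : items_ok (instance i j l).
Proof.
have tw_ok n : (0 < n <= 20)%N -> (0 < tw n) && (tw n <= 1).
  by case/andP=> n_gt0 n_le; rewrite tw_le1 n_le /tw divr_gt0 ?ltr0n.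
by rewrite /items_ok !all_cat !all_nseq !tw_ok ?orbT.
Qed.

Lemma sorted_instance i j l : sorted_items (instance i j l).
Proof.
rewrite /sorted_items sorted_pairwise; last by move=> y x z /[swap]; apply: le_trans.
by rewrite !pairwise_cat !allrel_catr !allrel_nseq ?pairwise_nseq //= tw_le.
Qed.

Lemma sum_instance i j l :
  \sum_(x <- instance i j l) x = tw (11 * i + 7 * j + 2 * l).
Proof.
rewrite !big_cat /= !big_nseq !iter_addr_0 /large /medium /small !tw_mulrn !tw_add.
by congr tw; lia.
Qed.

(* An optimal packing fills [k] bins with [large, medium, small] and the
   other [m - k] bins with [medium, medium, small, small, small]. *)
Definition hard_instance m k := instance k (2 * m - k) (3 * m - 2 * k).

Definition spread k q i := if (i < k)%N then i else (k + (i - k) %/ q)%N.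

Definition hard_packing m k i :=
  if (i < k)%N then i
  else if (i < 2 * m)%N then spread k 2 (i - k) else spread k 3 (i - 2 * m).

Lemma size_hard_instance m k : (k <= m)%N -> size (hard_instance m k) = (5 * m - 2 * k)%N.
Proof. by move=> k_le; rewrite !size_cat !size_nseq; lia. Qed.

Lemma nth_hard_instance m k i : (k <= m)%N -> (i < 5 * m - 2 * k)%N ->
  (hard_instance m k)`_i =
    if (i < k)%N then large else if (i < 2 * m)%N then medium else small.
Proof.
move=> k_le i_lt; rewrite !nth_cat !size_nseq !nth_nseq.
case: (ltnP i k) => // i_ge; case: (ltnP i (2 * m)) => i_lt2.
  by have -> : (i - k < 2 * m - k)%N by lia.
have -> : (i - k < 2 * m - k)%N = false by lia.
by have -> : (i - k - (2 * m - k) < 3 * m - 2 * k)%N by lia.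
Qed.

Lemma hard_packing_packs m k : (k <= m)%N -> packing (hard_instance m k) (hard_packing m k).
Proof.
move=> k_le j; rewrite size_hard_instance //.
rewrite -(big_mkord (fun i => hard_packing m k i == j) (fun i => (hard_instance m k)`_i)).
rewrite (big_cat_nat _ (n := k)) //=; last lia.
rewrite [X in _ + X](big_cat_nat _ (n := 2 * m)) /=; [|lia|lia].
rewrite (@sum_const_range _ _ _ _ _ large) => [|i /andP[_ i_lt]]; last first.
  by rewrite nth_hard_instance ?i_lt //; lia.
rewrite (@sum_const_range _ _ _ _ _ medium) => [|i /andP[i_ge i_lt]]; last first.
  rewrite nth_hard_instance //; last lia.
  by rewrite i_lt ifF //; lia.
rewrite (@sum_const_range _ _ _ _ _ small) => [|i /andP[i_ge i_lt]]; last first.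
  by rewrite nth_hard_instance // !ifF //; lia.
rewrite /large /medium /small !tw_mulrn !tw_add tw_le1.
have window lo hi c q :
    (forall i, lo <= i < hi -> hard_packing m k i = j -> c <= i < c + q)%N ->
    (count (fun i => hard_packing m k i == j) (index_iota lo hi) <= q)%N.
  move=> fiber; apply: count_window (iota_uniq _ _) _ => i.
  by rewrite mem_index_iota => /fiber + /eqP; apply.
have [j_lt|j_ge] := ltnP j k.
  rewrite -[20%N]/(11 * 1 + (7 * 1 + 2 * 1))%N.
  apply: leq_add; [|apply: leq_add]; rewrite leq_mul2l /=;
    [apply: (window _ _ j) | apply: (window _ _ (k + j)%N)
    | apply: (window _ _ (2 * m + j)%N)];
    by move=> i i_in; rewrite /hard_packing /spread; do !case: ifP => ?; lia.
rewrite -[20%N]/(11 * 0 + (7 * 2 + 2 * 3))%N.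
apply: leq_add; [|apply: leq_add]; rewrite leq_mul2l /=;
  [apply: (window _ _ 0%N) | apply: (window _ _ (2 * j)%N)
  | apply: (window _ _ (2 * m + 3 * j - 2 * k)%N)];
  by move=> i i_in; rewrite /hard_packing /spread; do !case: ifP => ?; lia.
Qed.

Lemma hard_instance_OPT m k : (k <= m)%N -> is_OPT (hard_instance m k) m.
Proof.
move=> k_le.
have sum_m : \sum_(x <- hard_instance m k) x = m%:R.
  by rewrite sum_instance -tw_nat; congr tw; lia.
have nbins_ge f : packing (hard_instance m k) f -> (m <= nbins (hard_instance m k) f)%N.
  by move/sum_le_nbins; rewrite sum_m ler_nat.
split=> //; exists (hard_packing m k); split; first exact: hard_packing_packs.
apply/eqP; rewrite eqn_leq nbins_ge ?andbT; last exact: hard_packing_packs.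
apply: nbins_le => i; rewrite size_hard_instance // /hard_packing /spread => i_lt.
by do !case: ifP => ?; lia.
Qed.

Lemma medium_gt_third : 1 < 3 * medium.
Proof. rewrite /medium /tw; lra. Qed.

Lemma count_big_instance i j l : count (big medium) (instance i j l) = (i + j)%N.
Proof.
rewrite /instance !count_cat !count_nseq /big /large /medium /small !tw_le /=.
by rewrite !mul1n mul0n addn0.
Qed.

Lemma room_tw n :
  room medium (Some (tw n)) = ((n + 7 <= 20)%N + (n + 14 <= 20)%N)%N.
Proof. by rewrite /room /medium mulr_natl tw_mulrn !tw_add !tw_le1. Qed.

Lemma instance_ge0 i j l : all (fun x => 0 <= x) (instance i j l).
Proof. by rewrite /instance !all_cat !all_nseq /large /medium /small !tw_ge0 !orbT. Qed.

End Instance.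

Section Adversary.
Variables (R : realType) (A : maxmin_alg R).

Definition choice (p : config R) : bool * bool := A (hist p) (large R) (small R) false.

Definition adv_step (p : config R) : config R :=
  place p (if (choice p).1 then large R else small R) (choice p).

Definition traj t := iter t adv_step (config0 R).

Definition took_head (e : hist_entry R) : bool := e.1.2.
Definition nlarge t := count took_head (hist (traj t)).
Definition nsmall t := count (predC took_head) (hist (traj t)).

Lemma hist_traj_succ t : let d := choice (traj t) in exists nb,
  hist (traj t.+1) = rcons (hist (traj t)) (if d.1 then large R else small R, d.1, nb).
Proof. by rewrite /traj iterS; exact: hist_place. Qed.

Lemma nlarge_succ t : nlarge t.+1 = (nlarge t + (choice (traj t)).1)%N.
Proof.
by rewrite /nlarge; have [nb ->] := hist_traj_succ t; rewrite -cats1 count_cat /= addn0.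
Qed.

Lemma nsmall_succ t : nsmall t.+1 = (nsmall t + ~~ (choice (traj t)).1)%N.
Proof.
by rewrite /nsmall; have [nb ->] := hist_traj_succ t; rewrite -cats1 count_cat /= addn0.
Qed.

Lemma nlarge_add_nsmall t : (nlarge t + nsmall t)%N = t.
Proof.
by elim: t => // t IH; rewrite nlarge_succ nsmall_succ; case: (choice _).1 => /=; lia.
Qed.

Lemma nlarge_mono : {homo nlarge : t1 t2 / (t1 <= t2)%N}.
Proof. by apply: homo_leq leqnn leq_trans _ => t; rewrite nlarge_succ leq_addr. Qed.

Lemma nsmall_mono : {homo nsmall : t1 t2 / (t1 <= t2)%N}.
Proof. by apply: homo_leq leqnn leq_trans _ => t; rewrite nsmall_succ leq_addr. Qed.

Definition run_rest i j l p := run_from A (size (instance R i j l)) (instance R i j l) p.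

Lemma run_rest_step i j l p : (0 < i)%N -> (0 < l)%N ->
  run_rest i j l p =
  run_rest (i - (choice p).1) j (l - ~~ (choice p).1) (adv_step p).
Proof.
move=> i_gt0 l_gt0; set s := instance R (i - 1) j l.
have headE : instance R i j l = large R :: s.
  by rewrite /s /instance -[in LHS](subnK i_gt0) addn1.
have tailE : instance R i j l = rcons (instance R i j (l - 1)) (small R).
  by rewrite /instance -[in LHS](subnK l_gt0) nseqD !rcons_cat cats1.
have [belastE lastE] :
    belast (large R) s = instance R i j (l - 1) /\ last (large R) s = small R.
  by move: tailE; rewrite headE lastI => /rcons_inj[-> ->].
have s_nil : nilp s = false.
  by rewrite /nilp /s /instance !size_cat !size_nseq; lia.
rewrite /run_rest headE /= run_from_cons lastE s_nil /adv_step /choice.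
by case: (A _ _ _ _) => [[] d2] /=; rewrite subn0 // -belastE size_belast.
Qed.

Lemma run_rest_traj i j l t :
  (forall t', (t' < t)%N -> (nlarge t' < i)%N /\ (nsmall t' < l)%N) ->
  ALG A (instance R i j l) = run_rest (i - nlarge t) j (l - nsmall t) (traj t).
Proof.
elim: t => [|t IH] before; first by rewrite /= !subn0.
rewrite IH => [|t' t'_lt]; last exact/before/ltnW.
have [a_lt b_lt] := before t (ltnSn t).
by rewrite run_rest_step ?subn_gt0 // nlarge_succ nsmall_succ !subnDA /traj iterS.
Qed.

Definition adv_inv (p : config R) (a b : nat) := exists nL nS : nat,
  [/\ load p = Some (tw R (11 * nL + 2 * nS)), (11 * nL + 2 * nS <= 20)%N,
      (12 + 8 * a + b <= 12 * used p + 8 * nL + nS)%N & (a + 1 <= used p + nL)%N].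

Lemma adv_inv_first :
  adv_inv (adv_step (config0 R)) (choice (config0 R)).1 (~~ (choice (config0 R)).1).
Proof.
rewrite /adv_step /place /=; case: (choice _) => [[] d2] /=.
  by exists 1%N, 0%N.
by exists 0%N, 1%N.
Qed.

Lemma adv_inv_step p a b : adv_inv p a b ->
  adv_inv (adv_step p) (a + (choice p).1) (b + ~~ (choice p).1).
Proof.
case=> nL [nS [load_p fit weight heads]].
rewrite /adv_step /place load_p; case: (choice p) => [[] d2] /=;
  rewrite tw_add tw_le1; case: ifP => [/andP[_ fits]|_] /=.
- by exists nL.+1, nS; split=> /=; try lia; congr (Some (tw R _)); lia.
- by exists 1%N, 0%N; split=> //=; lia.
- by exists nL, nS.+1; split=> /=; try lia; congr (Some (tw R _)); lia.
- by exists 0%N, 1%N; split=> //=; lia.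
Qed.

Lemma adv_inv_traj t : (0 < t)%N -> adv_inv (traj t) (nlarge t) (nsmall t).
Proof.
case: t => // t _; elim: t => [|t IH].
  by rewrite nlarge_succ nsmall_succ; exact: adv_inv_first.
by rewrite nlarge_succ nsmall_succ /traj iterS; exact: adv_inv_step.
Qed.

Definition stopped m t := (3 * m - 2 <= 2 * nlarge t + nsmall t)%N || (m <= nlarge t)%N.

Lemma hard_instance_alg_ge m k t : (0 < t)%N -> (k <= m)%N ->
  (forall t', (t' < t)%N -> (nlarge t' < k)%N /\ (nsmall t' < 3 * m - 2 * k)%N) ->
  (nlarge t <= k)%N -> (nsmall t <= 3 * m - 2 * k)%N -> stopped m t ->
  (5 * m <= 4 * ALG A (hard_instance R m k) + 1)%N.
Proof.
move=> t_gt0 k_le before a_le b_le; rewrite /stopped => stop.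
rewrite /hard_instance (run_rest_traj _ before).
have [nL [nS [load_t fit weight heads]]] := adv_inv_traj t_gt0.
have load_t_ge0 : load_ge0 (traj t) by rewrite /load_ge0 load_t tw_ge0.
have := run_from_potential (medium_gt_third R) A (leqnn _)
  (instance_ge0 R (k - nlarge t) (2 * m - k) (3 * m - 2 * k - nsmall t)) load_t_ge0.
rewrite count_big_instance load_t room_tw -/(run_rest _ _ _ _).
lia.
Qed.

Lemma exists_hard_instance m : (0 < m)%N ->
  exists2 k, (k <= m)%N & (5 * m <= 4 * ALG A (hard_instance R m k) + 1)%N.
Proof.
move=> m_gt0.
have stops : exists t, stopped m t.
  by exists (3 * m)%N; apply/orP; left; have := nlarge_add_nsmall (3 * m); lia.
case: (ex_minnP stops) => t stop_t t_min.
have t_gt0 : (0 < t)%N.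
  by case: t stop_t {t_min} => //; rewrite /stopped /nlarge /nsmall /=; lia.
have not_stop : ~~ stopped m t.-1 by apply/negP => /t_min; lia.
move: not_stop; rewrite /stopped negb_or -!ltnNge => /andP[b_lt a_lt].
have [a_succ b_succ] : nlarge t = (nlarge t.-1 + (choice (traj t.-1)).1)%N /\
                       nsmall t = (nsmall t.-1 + ~~ (choice (traj t.-1)).1)%N.
  by rewrite -nlarge_succ -nsmall_succ prednK.
exists (nlarge t.-1).+1; first by lia.
apply: hard_instance_alg_ge t_gt0 _ _ _ _ stop_t.
- by lia.
- move=> t' t'_lt; have t'_le : (t' <= t.-1)%N by lia.
  by have := nlarge_mono t'_le; have := nsmall_mono t'_le; lia.
- by case: (choice _).1 a_succ => /=; lia.
- by case: (choice _).1 a_succ b_succ => /=; lia.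
Qed.

End Adversary.

Theorem theorem2 (R : realType) (A : maxmin_alg R) (m : nat) :
  (0 < m)%N -> ~~ odd m ->
  exists I : seq R,
    [/\ items_ok I, sorted_items I, is_OPT I m &
        (5 / 4) * (m%:R : R) - 1 / 4 <= (ALG A I)%:R].
Proof.
(* The adversary works for every positive [m]. *)
move=> m_gt0 _.
have [k k_le alg_ge] := exists_hard_instance A m_gt0.
exists (hard_instance R m k); split.
- exact: items_ok_instance.
- exact: sorted_instance.
- exact: hard_instance_OPT.
- have : ((5 * m)%:R <= (4 * ALG A (hard_instance R m k) + 1)%:R :> R) by rewrite ler_nat.
  rewrite natrD !natrM; lra.
Qed.
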